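(* Let $(\eta,F)$ be any generalised entropy. Then: (a) for any jointly distributed random variables $X$ (with values in a finite set) and $Y$ (discrete), $H(X)-H(X\mid Y)\geq 0$; (b) (data processing inequality) for any discrete random variables $X,Y,Z$ such that $Z$ is conditionally independent of $X$ given $Y$, we have $H(X\mid Z)\geq H(X\mid Y)$.
   Context: Generalised entropy: a pair $(\eta,F)$ where $F$ is a bounded real-valued function defined on probability vectors of every finite length, which is symmetric (unchanged by permuting entries) and expansible (unchanged by appending zero entries), and $\eta$ is a real function of a real variable, such that either (a) $\eta$ is increasing and $F$ is concave, or (b) $\eta$ is decreasing and $F$ is convex. The entropies are $H(X)=\eta(F(p_X))$ and $H(X\mid Y)=\eta\big(\sum_{y:\,p(y)>0}p(y)F(p_{X\mid y})\big)$, where $p_{X\mid y}=(p(x\mid y))_x$ is the posterior distribution of $X$ given $Y=y$ (and similarly for $Z$). *)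

From Stdlib Require Import Reals List Permutation.
From Coquelicot Require Import Coquelicot.
Open Scope R_scope.

Definition rsum (n : nat) (f : nat -> R) : R :=
  fold_right Rplus 0 (map f (seq 0 n)).

Definition probvec (l : list R) : Prop :=
  List.Forall (fun a => 0 <= a) l /\ fold_right Rplus 0 l = 1.

Definition mix (t : R) (l1 l2 : list R) : list R :=
  map (fun ab => t * fst ab + (1 - t) * snd ab) (combine l1 l2).

Definition F_bounded (F : list R -> R) : Prop :=
  exists M, forall l, probvec l -> Rabs (F l) <= M.

Definition F_symmetric (F : list R -> R) : Prop :=
  forall l1 l2, probvec l1 -> Permutation l1 l2 -> F l1 = F l2.

Definition F_expansible (F : list R -> R) : Prop :=
  forall l, probvec l -> F (l ++ 0 :: nil) = F l.

Definition F_concave (F : list R -> R) : Prop :=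
  forall l1 l2 t, probvec l1 -> probvec l2 -> length l1 = length l2 ->
    0 <= t <= 1 -> t * F l1 + (1 - t) * F l2 <= F (mix t l1 l2).

Definition F_convex (F : list R -> R) : Prop :=
  forall l1 l2 t, probvec l1 -> probvec l2 -> length l1 = length l2 ->
    0 <= t <= 1 -> F (mix t l1 l2) <= t * F l1 + (1 - t) * F l2.

(* "increasing"/"decreasing" taken in the weak (monotone) sense *)
Definition increasing_fun (eta : R -> R) : Prop :=
  forall a b, a <= b -> eta a <= eta b.
Definition decreasing_fun (eta : R -> R) : Prop :=
  forall a b, a <= b -> eta b <= eta a.

Definition gen_entropy (eta : R -> R) (F : list R -> R) : Prop :=
  F_bounded F /\ F_symmetric F /\ F_expansible F /\
  ((increasing_fun eta /\ F_concave F) \/ (decreasing_fun eta /\ F_convex F)).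

(* A joint distribution of (X,Y): X takes values in {0,...,n-1},
   Y takes values in nat (any discrete variable, encoded injectively). *)
Definition joint_pmf (n : nat) (p : nat -> nat -> R) : Prop :=
  (forall x y, 0 <= p x y) /\ (forall x, ex_series (p x)) /\
  rsum n (fun x => Series (p x)) = 1.

Definition marg_X (n : nat) (p : nat -> nat -> R) : list R :=
  map (fun x => Series (p x)) (seq 0 n).

Definition marg_Y (n : nat) (p : nat -> nat -> R) (y : nat) : R :=
  rsum n (fun x => p x y).

Definition posterior (n : nat) (p : nat -> nat -> R) (y : nat) : list R :=
  map (fun x => p x y / marg_Y n p y) (seq 0 n).

Definition H_X (eta : R -> R) (F : list R -> R) (n : nat) (p : nat -> nat -> R) : R :=
  eta (F (marg_X n p)).

Definition H_cond (eta : R -> R) (F : list R -> R) (n : nat) (p : nat -> nat -> R) : R :=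
  eta (Series (fun y =>
    if Rlt_dec 0 (marg_Y n p y) then marg_Y n p y * F (posterior n p y) else 0)).

Definition joint3_pmf (n : nat) (p : nat -> nat -> nat -> R) : Prop :=
  (forall x y z, 0 <= p x y z) /\ (forall x y, ex_series (p x y)) /\
  (forall x, ex_series (fun y => Series (p x y))) /\
  rsum n (fun x => Series (fun y => Series (p x y))) = 1.

Definition marg_XY (p : nat -> nat -> nat -> R) (x y : nat) : R :=
  Series (fun z => p x y z).
Definition marg_XZ (p : nat -> nat -> nat -> R) (x z : nat) : R :=
  Series (fun y => p x y z).

(* Z conditionally independent of X given Y:
   p(x,y,z) p(y) = p(x,y) p(y,z) for all x,y,z *)
Definition cond_indep_Z_X_given_Y (n : nat) (p : nat -> nat -> nat -> R) : Prop :=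
  forall x y z,
    p x y z * rsum n (fun x' => marg_XY p x' y) =
    marg_XY p x y * rsum n (fun x' => p x' y z).

(* The key object is the perspective  Ĝ(u) = |u| G(u/|u|)  (with Ĝ(0) = 0) of a concave,
   bounded G, where |u| is the total mass of the nonnegative vector u.  It is positively
   homogeneous and superadditive, and  Σ_y p(y) G(p_{X|y}) = Σ_y Ĝ(p(·,y)).  Superadditivity
   extends to countable sums, the boundedness of G controlling the tails; this gives (a):
   Σ_y Ĝ(p(·,y)) ≤ Ĝ(p_X) = G(p_X).  For (b), conditional independence makes each p(·,y,z)
   proportional to p(·,y), so homogeneity gives Σ_z Ĝ(p(·,y,z)) = Ĝ(p(·,y)), while
   superadditivity gives Σ_y Ĝ(p(·,y,z)) ≤ Ĝ(p(·,z)); exchanging the order of summation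
   compares the two conditional averages.  Monotonicity of η concludes, and the convex case
   is the concave one applied to -F. *)

From Stdlib Require Import Reals List Permutation Lra Lia.
From Coquelicot Require Import Coquelicot.
Open Scope R_scope.

Lemma rsum_S n f : rsum (S n) f = rsum n f + f n.
Proof.
  unfold rsum. rewrite seq_S, map_app, fold_right_app. simpl.
  generalize (map f (seq 0 n)) as l.
  induction l as [|a l IH]; simpl; [ring | rewrite IH; ring].
Qed.

Lemma rsum_ext n f g : (forall i, (i < n)%nat -> f i = g i) -> rsum n f = rsum n g.
Proof.
  induction n as [|n IH]; intros H; [reflexivity|].
  rewrite !rsum_S, (H n) by lia. f_equal. apply IH. intros i Hi. apply H. lia.
Qed.

Lemma rsum_plus n f g : rsum n (fun i => f i + g i) = rsum n f + rsum n g.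
Proof. induction n as [|n IH]; [unfold rsum; simpl; ring|]. rewrite !rsum_S, IH. ring. Qed.

Lemma rsum_minus n f g : rsum n (fun i => f i - g i) = rsum n f - rsum n g.
Proof. induction n as [|n IH]; [unfold rsum; simpl; ring|]. rewrite !rsum_S, IH. ring. Qed.

Lemma rsum_scal n c f : rsum n (fun i => c * f i) = c * rsum n f.
Proof. induction n as [|n IH]; [unfold rsum; simpl; ring|]. rewrite !rsum_S, IH. ring. Qed.

Lemma rsum_const0 n : rsum n (fun _ => 0) = 0.
Proof. induction n as [|n IH]; [reflexivity|]. rewrite rsum_S, IH. ring. Qed.

Lemma rsum_le n f g : (forall i, (i < n)%nat -> f i <= g i) -> rsum n f <= rsum n g.
Proof.
  induction n as [|n IH]; intros H; [unfold rsum; simpl; lra|]. rewrite !rsum_S.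
  assert (f n <= g n) by (apply H; lia).
  assert (rsum n f <= rsum n g) by (apply IH; intros; apply H; lia).
  lra.
Qed.

Lemma rsum_nonneg n f : (forall i, (i < n)%nat -> 0 <= f i) -> 0 <= rsum n f.
Proof. intros H. rewrite <- (rsum_const0 n). apply rsum_le, H. Qed.

Lemma rsum_mono_len N N' f : (forall i, 0 <= f i) -> (N <= N')%nat -> rsum N f <= rsum N' f.
Proof.
  intros H Hle. induction Hle as [|N' _ IH]; [lra|]. rewrite rsum_S. specialize (H N'). lra.
Qed.

Lemma term_le_rsum n f i :
  (forall j, (j < n)%nat -> 0 <= f j) -> (i < n)%nat -> f i <= rsum n f.
Proof.
  induction n as [|n IH]; intros H Hi; [lia|]. rewrite rsum_S.
  assert (0 <= rsum n f) by (apply rsum_nonneg; intros; apply H; lia).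
  assert (0 <= f n) by (apply H; lia).
  destruct (Nat.eq_dec i n) as [->|Hin]; [lra|].
  assert (f i <= rsum n f) by (apply IH; [intros; apply H|]; lia).
  lra.
Qed.

Lemma rsum_eq0 n f : (forall j, (j < n)%nat -> 0 <= f j) -> rsum n f = 0 ->
  forall i, (i < n)%nat -> f i = 0.
Proof.
  intros H H0 i Hi. pose proof (term_le_rsum n f i H Hi). pose proof (H i Hi). lra.
Qed.

Lemma rsum_swap n N h :
  rsum n (fun i => rsum N (fun k => h k i)) = rsum N (fun k => rsum n (h k)).
Proof.
  induction N as [|N IH]; [apply rsum_const0|].
  rewrite rsum_S, <- IH, <- (rsum_plus n (fun i => rsum N (fun k => h k i)) (h N)).
  apply rsum_ext. intros i _. rewrite rsum_S. reflexivity.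
Qed.

Lemma sum_n_rsum a N : sum_n a N = rsum (S N) a.
Proof.
  induction N as [|N IH].
  - rewrite sum_O. unfold rsum; simpl. symmetry. apply Rplus_0_r.
  - rewrite sum_Sn, IH, (rsum_S (S N)). reflexivity.
Qed.

Lemma is_series_const0 : is_series (fun _ => 0) 0.
Proof.
  assert (H : is_lim_seq (sum_n (fun _ => 0)) 0); [|exact H].
  apply (is_lim_seq_ext (fun _ => 0)); [|apply is_lim_seq_const].
  intros N. rewrite sum_n_rsum. symmetry. apply rsum_const0.
Qed.

Lemma is_series_le a b la lb :
  is_series a la -> is_series b lb -> (forall k, a k <= b k) -> la <= lb.
Proof.
  intros Ha Hb H.
  apply (is_lim_seq_le (sum_n a) (sum_n b) la lb); [|exact Ha|exact Hb].
  intros N. rewrite !sum_n_rsum. apply rsum_le. intros; apply H.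
Qed.

Lemma is_series_le_of_rsum a l B : is_series a l -> (forall N, rsum N a <= B) -> l <= B.
Proof.
  intros Ha HB.
  apply (is_lim_seq_le (sum_n a) (fun _ => B) l B); [|exact Ha|apply is_lim_seq_const].
  intros N. rewrite sum_n_rsum. apply HB.
Qed.

Lemma rsum_le_is_series a l N : (forall k, 0 <= a k) -> is_series a l -> rsum N a <= l.
Proof.
  intros Ha Hs.
  apply (is_lim_seq_le_loc (fun _ => rsum N a) (sum_n a) (rsum N a) l);
    [|apply is_lim_seq_const|exact Hs].
  exists N. intros m Hm. rewrite sum_n_rsum. apply rsum_mono_len; [exact Ha|lia].
Qed.

Lemma term_le_is_series a l k : (forall k, 0 <= a k) -> is_series a l -> a k <= l.
Proof.
  intros Ha Hs. apply Rle_trans with (rsum (S k) a).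
  - apply term_le_rsum; [intros; apply Ha|lia].
  - exact (rsum_le_is_series a l (S k) Ha Hs).
Qed.

Lemma is_series_nonneg a l : (forall k, 0 <= a k) -> is_series a l -> 0 <= l.
Proof. intros Ha Hs. exact (rsum_le_is_series a l 0 Ha Hs). Qed.

Lemma ex_series_nonneg_bounded a B :
  (forall k, 0 <= a k) -> (forall N, rsum N a <= B) -> ex_series a.
Proof.
  intros Ha HB. apply ex_series_Reals_1, growing_cv.
  - intros N. rewrite <- !sum_n_Reals, !sum_n_rsum, (rsum_S (S N)).
    specialize (Ha (S N)). lra.
  - exists B. intros x [N ->]. rewrite <- sum_n_Reals, sum_n_rsum. apply HB.
Qed.

Lemma is_series_rsum N (a : nat -> nat -> R) (l : nat -> R) :
  (forall j, (j < N)%nat -> is_series (a j) (l j)) ->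
  is_series (fun k => rsum N (fun j => a j k)) (rsum N l).
Proof.
  induction N as [|N IH]; intros H; [exact is_series_const0|].
  apply (is_series_ext (fun k => rsum N (fun j => a j k) + a N k)).
  - intros k. rewrite rsum_S. reflexivity.
  - rewrite rsum_S.
    exact (is_series_plus _ _ _ _ (IH (fun j Hj => H j ltac:(lia))) (H N ltac:(lia))).
Qed.

Lemma ex_series_column (f : nat -> nat -> R) (g : nat -> R) :
  (forall y z, 0 <= f y z) -> (forall y, is_series (f y) (g y)) -> ex_series g ->
  forall z, ex_series (fun y => f y z).
Proof.
  intros Hf Hr Hg z. apply (ex_series_le (fun y => f y z) g); [|exact Hg].
  intros y. change (Rabs (f y z) <= g y).
  rewrite Rabs_right by (apply Rle_ge, Hf). apply (term_le_is_series (f y)); auto.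
Qed.

Lemma is_series_swap_nonneg (f : nat -> nat -> R) (g : nat -> R) (L : R) :
  (forall y z, 0 <= f y z) -> (forall y, is_series (f y) (g y)) -> is_series g L ->
  is_series (fun z => Series (fun y => f y z)) L.
Proof.
  intros Hf Hr Hg.
  set (h := fun z => Series (fun y => f y z)).
  assert (Hc : forall z, is_series (fun y => f y z) (h z)).
  { intros z. apply Series_correct, (ex_series_column f g); auto. exists L; exact Hg. }
  assert (Hh : forall z, 0 <= h z).
  { intros z. apply (is_series_nonneg (fun y => f y z)); auto. }
  assert (Hpart : forall Z, rsum Z h <= L).
  { intros Z.
    apply (is_series_le _ _ _ _ (is_series_rsum Z (fun z y => f y z) h (fun z _ => Hc z)) Hg).
    intros y. apply rsum_le_is_series; auto. }
  assert (HS := Series_correct _ (ex_series_nonneg_bounded h L Hh Hpart)).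
  assert (Series h <= L) by exact (is_series_le_of_rsum h _ L HS Hpart).
  assert (L <= Series h).
  { apply (is_series_le_of_rsum g); [exact Hg|]. intros Y.
    apply (is_series_le _ _ _ _ (is_series_rsum Y f g (fun y _ => Hr y)) HS).
    intros z. apply rsum_le_is_series; auto. }
  replace L with (Series h) by lra. exact HS.
Qed.

(* Fubini: shift [f] by its dominating [u] to reduce to two nonnegative double series. *)
Lemma is_series_swap (f u : nat -> nat -> R) (U : nat -> R) (LU : R) :
  (forall y z, Rabs (f y z) <= u y z) ->
  (forall y, is_series (u y) (U y)) -> is_series U LU ->
  is_series (fun z => Series (fun y => f y z)) (Series (fun y => Series (f y))).
Proof.
  intros Hf HU HLU.
  assert (Hu : forall y z, 0 <= u y z).
  { intros y z. eapply Rle_trans; [apply Rabs_pos|apply Hf]. }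
  assert (Hfu : forall y z, 0 <= f y z + u y z).
  { intros y z. specialize (Hf y z). apply Rabs_le_between in Hf. lra. }
  assert (Hrow : forall y, ex_series (f y)).
  { intros y. apply (ex_series_le (f y) (u y)); [apply Hf|exists (U y); apply HU]. }
  assert (Hrow_bound : forall y, Rabs (Series (f y)) <= U y).
  { intros y. eapply Rle_trans; [apply Series_Rabs|].
    - apply (ex_series_le (fun z => Rabs (f y z)) (u y)); [|exists (U y); apply HU].
      intros z. change (Rabs (Rabs (f y z)) <= u y z). rewrite Rabs_Rabsolu. apply Hf.
    - rewrite <- (is_series_unique _ _ (HU y)). apply Series_le; [|exists (U y); apply HU].
      intros z. split; [apply Rabs_pos|apply Hf]. }
  assert (Hsum : is_series (fun y => Series (f y)) (Series (fun y => Series (f y)))).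
  { apply Series_correct, (ex_series_le (fun y => Series (f y)) U);
      [apply Hrow_bound|exists LU; exact HLU]. }
  assert (Hshift := is_series_swap_nonneg (fun y z => f y z + u y z)
    (fun y => Series (f y) + U y) _ Hfu
    (fun y => is_series_plus _ _ _ _ (Series_correct _ (Hrow y)) (HU y))
    (is_series_plus _ _ _ _ Hsum HLU)).
  assert (Hu_swap := is_series_swap_nonneg u U LU Hu HU HLU).
  assert (Hcol : forall z, ex_series (fun y => u y z)).
  { apply (ex_series_column u U); [exact Hu|exact HU|exists LU; exact HLU]. }
  assert (Hcol_shift : forall z, ex_series (fun y => f y z + u y z)).
  { apply (ex_series_column (fun y z => f y z + u y z) (fun y => Series (f y) + U y));
      [exact Hfu| |].
    - intros y. exact (is_series_plus _ _ _ _ (Series_correct _ (Hrow y)) (HU y)).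
    - eexists. exact (is_series_plus _ _ _ _ Hsum HLU). }
  replace (Series (fun y => Series (f y)))
    with (Series (fun y => Series (f y)) + LU - LU) by ring.
  apply (is_series_ext (fun z => Series (fun y => f y z + u y z) - Series (fun y => u y z))).
  - intros z. rewrite <- Series_minus by auto. apply Series_ext. intros y. ring.
  - exact (is_series_minus _ _ _ _ Hshift Hu_swap).
Qed.

Definition vec (f : nat -> R) (n : nat) : list R := map f (seq 0 n).

Definition is_pmf (n : nat) (f : nat -> R) : Prop :=
  (forall i, (i < n)%nat -> 0 <= f i) /\ rsum n f = 1.

Lemma vec_ext n f g : (forall i, (i < n)%nat -> f i = g i) -> vec f n = vec g n.
Proof.
  intros H. apply map_ext_in. intros i Hi. apply in_seq in Hi. apply H. lia.
Qed.

Lemma probvec_vec n f : is_pmf n f -> probvec (vec f n).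
Proof.
  intros [Hf Hsum]. split; [|exact Hsum].
  apply Forall_forall. intros x Hx. apply in_map_iff in Hx.
  destruct Hx as [i [<- Hi]]. apply in_seq in Hi. apply Hf. lia.
Qed.

Lemma mix_vec t n f g :
  mix t (vec f n) (vec g n) = vec (fun i => t * f i + (1 - t) * g i) n.
Proof.
  unfold mix, vec. induction (seq 0 n) as [|i l IH]; simpl; [reflexivity|].
  rewrite IH. reflexivity.
Qed.

Lemma F_concave_vec G n f g t : F_concave G -> is_pmf n f -> is_pmf n g -> 0 <= t <= 1 ->
  t * G (vec f n) + (1 - t) * G (vec g n) <= G (vec (fun i => t * f i + (1 - t) * g i) n).
Proof.
  intros HG Hf Hg Ht. rewrite <- mix_vec. apply HG; auto using probvec_vec.
  unfold vec. rewrite !length_map. reflexivity.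
Qed.

Lemma is_pmf_normalize n u : (forall i, (i < n)%nat -> 0 <= u i) -> 0 < rsum n u ->
  is_pmf n (fun i => u i / rsum n u).
Proof.
  intros Hu Hs. split.
  - intros i Hi. apply Rdiv_le_0_compat; auto.
  - rewrite (rsum_ext n _ (fun i => / rsum n u * u i)) by (intros; unfold Rdiv; ring).
    rewrite rsum_scal. field. lra.
Qed.

Lemma F_convex_opp F : F_convex F -> F_concave (fun l => - F l).
Proof. intros HF l1 l2 t H1 H2 Hl Ht. pose proof (HF l1 l2 t H1 H2 Hl Ht). lra. Qed.

Lemma probvec_bound_opp F M : (forall l, probvec l -> Rabs (F l) <= M) ->
  forall l, probvec l -> Rabs (- F l) <= M.
Proof. intros HM l Hl. rewrite Rabs_Ropp. auto. Qed.

Definition persp (G : list R -> R) (n : nat) (u : nat -> R) : R :=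
  if Rlt_dec 0 (rsum n u) then rsum n u * G (vec (fun i => u i / rsum n u) n) else 0.

Section Perspective.

Variables (G : list R -> R) (n : nat).

Lemma persp_ext u v : (forall i, (i < n)%nat -> u i = v i) -> persp G n u = persp G n v.
Proof.
  intros H. unfold persp. rewrite (rsum_ext n u v H).
  destruct (Rlt_dec 0 (rsum n v)); [|reflexivity].
  do 2 f_equal. apply vec_ext. intros i Hi. rewrite H by exact Hi. reflexivity.
Qed.

Lemma persp_rsum0 u : rsum n u = 0 -> persp G n u = 0.
Proof. intros H. unfold persp. rewrite H. destruct (Rlt_dec 0 0); [lra|reflexivity]. Qed.

Lemma persp_scale c u : 0 <= c -> persp G n (fun i => c * u i) = c * persp G n u.
Proof.
  intros Hc. destruct (Req_dec c 0) as [->|Hc0].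
  { rewrite Rmult_0_l. apply persp_rsum0. rewrite rsum_scal. ring. }
  unfold persp. rewrite rsum_scal.
  destruct (Rlt_dec 0 (c * rsum n u)) as [Hcs|Hcs], (Rlt_dec 0 (rsum n u)) as [Hs|Hs].
  - rewrite (vec_ext n _ (fun i => u i / rsum n u)) by (intros; field; lra). ring.
  - exfalso. apply Hs. apply (Rmult_lt_reg_l c); lra.
  - exfalso. apply Hcs. apply Rmult_lt_0_compat; lra.
  - ring.
Qed.

Lemma persp_opp u : persp (fun l => - G l) n u = - persp G n u.
Proof. unfold persp. destruct (Rlt_dec 0 (rsum n u)); ring. Qed.

Lemma persp_pmf u : is_pmf n u -> persp G n u = G (vec u n).
Proof.
  intros [_ Hs]. unfold persp. rewrite Hs. destruct (Rlt_dec 0 1); [|lra].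
  rewrite (vec_ext n _ u) by (intros; field). ring.
Qed.

(* The last hypothesis says [w k = (c k / s) v], stated without dividing by [s],
   which may be [0]. *)
Lemma is_series_persp_proportional (w : nat -> nat -> R) (v c : nat -> R) (s : R) :
  (forall k, 0 <= c k) -> is_series c s -> rsum n v = s ->
  (forall k, rsum n (w k) = c k) ->
  (forall k i, (i < n)%nat -> w k i * s = v i * c k) ->
  is_series (fun k => persp G n (w k)) (persp G n v).
Proof.
  intros Hc0 Hc Hv Hw Hwv.
  destruct (Req_dec s 0) as [Hs|Hs].
  - rewrite (persp_rsum0 v) by lra.
    apply (is_series_ext (fun _ => 0)); [|exact is_series_const0].
    intros k. symmetry. apply persp_rsum0. rewrite Hw.
    pose proof (term_le_is_series c s k Hc0 Hc). specialize (Hc0 k). lra.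
  - assert (Hpos : 0 < s).
    { pose proof (is_series_nonneg c s Hc0 Hc). lra. }
    apply (is_series_ext (fun k => c k * / s * persp G n v)).
    + intros k. rewrite <- persp_scale.
      * symmetry. apply persp_ext. intros i Hi.
        apply (Rmult_eq_reg_r s); [|lra]. rewrite Hwv by exact Hi. field. lra.
      * apply Rmult_le_pos; [apply Hc0|left; apply Rinv_0_lt_compat; lra].
    + pose proof (is_series_scal_r (persp G n v) _ _ (is_series_scal_r (/ s) c s Hc)) as H.
      replace (s * / s * persp G n v) with (persp G n v) in H by (field; lra). exact H.
Qed.

Variable M : R.
Hypothesis G_bounded : forall l, probvec l -> Rabs (G l) <= M.

Lemma persp_bound u : (forall i, (i < n)%nat -> 0 <= u i) ->
  Rabs (persp G n u) <= M * rsum n u.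
Proof.
  intros Hu. unfold persp. destruct (Rlt_dec 0 (rsum n u)) as [Hs|Hs].
  - rewrite Rabs_mult, Rabs_right, Rmult_comm by lra.
    apply Rmult_le_compat_r; [lra|]. apply G_bounded, probvec_vec, is_pmf_normalize; auto.
  - assert (rsum n u = 0) as -> by (pose proof (rsum_nonneg n u Hu); lra).
    rewrite Rabs_R0. lra.
Qed.

Lemma ex_series_persp (u : nat -> nat -> R) (T : R) :
  (forall k i, (i < n)%nat -> 0 <= u k i) -> is_series (fun k => rsum n (u k)) T ->
  ex_series (fun k => persp G n (u k)).
Proof.
  intros Hu HT. apply (ex_series_le (fun k => persp G n (u k)) (fun k => M * rsum n (u k))).
  - intros k. apply persp_bound, Hu.
  - exists (M * T). exact (is_series_scal_l _ _ _ HT).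
Qed.

Hypothesis G_concave : F_concave G.

Lemma persp_superadditive u v :
  (forall i, (i < n)%nat -> 0 <= u i) -> (forall i, (i < n)%nat -> 0 <= v i) ->
  persp G n u + persp G n v <= persp G n (fun i => u i + v i).
Proof.
  intros Hu Hv.
  pose proof (rsum_nonneg n u Hu) as Hsu. pose proof (rsum_nonneg n v Hv) as Hsv.
  destruct (Req_dec (rsum n u) 0) as [Hu0|Hu0].
  { rewrite (persp_rsum0 u Hu0), (persp_ext (fun i => u i + v i) v); [lra|].
    intros i Hi. rewrite (rsum_eq0 n u Hu Hu0 i Hi). ring. }
  destruct (Req_dec (rsum n v) 0) as [Hv0|Hv0].
  { rewrite (persp_rsum0 v Hv0), (persp_ext (fun i => u i + v i) u); [lra|].
    intros i Hi. rewrite (rsum_eq0 n v Hv Hv0 i Hi). ring. }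
  set (su := rsum n u) in *. set (sv := rsum n v) in *.
  assert (Hsum : rsum n (fun i => u i + v i) = su + sv) by apply rsum_plus.
  unfold persp. rewrite Hsum. fold su sv.
  destruct (Rlt_dec 0 su) as [Hsu_pos|]; [|lra]. destruct (Rlt_dec 0 sv) as [Hsv_pos|]; [|lra].
  destruct (Rlt_dec 0 (su + sv)); [|lra].
  set (t := su / (su + sv)).
  assert (Ht : 0 <= t <= 1).
  { unfold t. split; [apply Rdiv_le_0_compat; lra|].
    apply Rmult_le_reg_r with (su + sv); [lra|].
    unfold Rdiv. rewrite Rmult_assoc, Rinv_l by lra. lra. }
  pose proof (F_concave_vec G n _ _ t G_concave (is_pmf_normalize n u Hu Hsu_pos)
    (is_pmf_normalize n v Hv Hsv_pos) Ht) as Hconc.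
  fold su sv in Hconc. cbv beta in Hconc.
  rewrite (vec_ext n (fun i => t * (u i / su) + (1 - t) * (v i / sv))
    (fun i => (u i + v i) / (su + sv))) in Hconc by (intros; unfold t; field; lra).
  apply Rmult_le_compat_l with (r := su + sv) in Hconc; [|lra].
  replace ((su + sv) * (t * G (vec (fun i => u i / su) n)
             + (1 - t) * G (vec (fun i => v i / sv) n)))
    with (su * G (vec (fun i => u i / su) n) + sv * G (vec (fun i => v i / sv) n))
    in Hconc by (unfold t; field; lra).
  exact Hconc.
Qed.

Lemma persp_rsum_le (u : nat -> nat -> R) N :
  (forall k i, (i < n)%nat -> 0 <= u k i) ->
  rsum N (fun k => persp G n (u k)) <= persp G n (fun i => rsum N (fun k => u k i)).
Proof.
  intros Hu. induction N as [|N IH].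
  { rewrite persp_rsum0; [unfold rsum; simpl; lra|apply rsum_const0]. }
  rewrite rsum_S, (persp_ext (fun i => rsum (S N) (fun k => u k i))
    (fun i => rsum N (fun k => u k i) + u N i)) by (intros; rewrite rsum_S; reflexivity).
  eapply Rle_trans; [|apply persp_superadditive].
  - apply Rplus_le_compat_r, IH.
  - intros i Hi. apply rsum_nonneg. intros; apply Hu, Hi.
  - intros i Hi. apply Hu, Hi.
Qed.

(* The boundedness of [G] controls the tail [U - partial sum]. *)
Lemma persp_series_le (u : nat -> nat -> R) (U : nat -> R) :
  (forall k i, (i < n)%nat -> 0 <= u k i) ->
  (forall i, (i < n)%nat -> is_series (fun k => u k i) (U i)) ->
  Series (fun k => persp G n (u k)) <= persp G n U.
Proof.
  intros Hu HU.
  set (t := fun k => rsum n (u k)).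
  assert (Ht : is_series t (rsum n U)) by exact (is_series_rsum n (fun i k => u k i) U HU).
  assert (Hpartial : forall N i, (i < n)%nat -> rsum N (fun k => u k i) <= U i).
  { intros N i Hi. apply (rsum_le_is_series (fun k => u k i));
      [intros; apply Hu, Hi|apply HU, Hi]. }
  assert (Hkey : forall N,
    rsum N (fun k => persp G n (u k) + M * t k) <= persp G n U + M * rsum n U).
  { intros N. rewrite rsum_plus, rsum_scal.
    set (P := fun i => rsum N (fun k => u k i)).
    set (Q := fun i => U i - P i).
    assert (HP : forall i, (i < n)%nat -> 0 <= P i).
    { intros i Hi. apply rsum_nonneg. intros; apply Hu, Hi. }
    assert (HQ : forall i, (i < n)%nat -> 0 <= Q i).
    { intros i Hi. unfold Q, P. specialize (Hpartial N i Hi). lra. }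
    assert (Hfin := persp_rsum_le u N Hu). fold P in Hfin.
    assert (Hsup := persp_superadditive P Q HP HQ).
    rewrite (persp_ext (fun i => P i + Q i) U) in Hsup by (intros; unfold Q; ring).
    assert (Htail := persp_bound Q HQ). apply Rabs_le_between in Htail.
    assert (HQsum : rsum n Q = rsum n U - rsum N t).
    { unfold Q, P. rewrite rsum_minus, rsum_swap. reflexivity. }
    rewrite HQsum in Htail. lra. }
  assert (Hshift := is_series_plus _ _ _ _
    (Series_correct _ (ex_series_persp u _ Hu Ht)) (is_series_scal_l M _ _ Ht)).
  assert (H := is_series_le_of_rsum _ _ _ Hshift Hkey).
  change (Series (fun k => persp G n (u k)) + M * rsum n U <= persp G n U + M * rsum n U) in H.
  lra.
Qed.

End Perspective.

Definition cond_avg (G : list R -> R) (n : nat) (q : nat -> nat -> R) : R :=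
  Series (fun y => persp G n (fun x => q x y)).

Lemma H_cond_cond_avg eta F n q : H_cond eta F n q = eta (cond_avg F n q).
Proof. reflexivity. Qed.

Lemma cond_avg_opp G n q : cond_avg (fun l => - G l) n q = - cond_avg G n q.
Proof. unfold cond_avg. rewrite <- Series_opp. apply Series_ext. intros y. apply persp_opp. Qed.

Section ConditionalAverage.

Variables (G : list R -> R) (M : R).
Hypothesis G_bounded : forall l, probvec l -> Rabs (G l) <= M.
Hypothesis G_concave : F_concave G.

Lemma cond_avg_le_marginal n p : joint_pmf n p -> cond_avg G n p <= G (marg_X n p).
Proof.
  intros [Hp [Hex Hsum]].
  change (marg_X n p) with (vec (fun x => Series (p x)) n).
  rewrite <- persp_pmf.
  - apply (persp_series_le G n M G_bounded G_concave (fun y x => p x y)).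
    + intros; apply Hp.
    + intros x _. apply Series_correct, Hex.
  - split; [|exact Hsum].
    intros x _. apply (is_series_nonneg (p x)); [apply Hp|apply Series_correct, Hex].
Qed.

Lemma cond_avg_data_processing n p : joint3_pmf n p -> cond_indep_Z_X_given_Y n p ->
  cond_avg G n (marg_XY p) <= cond_avg G n (marg_XZ p).
Proof.
  intros [Hp [Hrow [Hcol Hsum]]] HCI.
  set (a := marg_XY p). set (b := marg_XZ p).
  set (py := fun y => rsum n (fun x => a x y)).
  set (pyz := fun y z => rsum n (fun x => p x y z)).
  assert (Ha : forall x y, is_series (p x y) (a x y)) by (intros; apply Series_correct, Hrow).
  assert (Ha_sum : forall x, is_series (a x) (Series (a x)))
    by (intros; apply Series_correct, Hcol).
  assert (Hb : forall x z, is_series (fun y => p x y z) (b x z)).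
  { intros x z.
    apply Series_correct, (ex_series_column (p x) (a x)); [apply Hp|apply Ha|apply Hcol]. }
  assert (Hpy : is_series py 1).
  { rewrite <- Hsum. exact (is_series_rsum n a _ (fun x _ => Ha_sum x)). }
  assert (Hpz : is_series (fun z => rsum n (fun x => b x z)) 1).
  { rewrite <- Hsum. apply (is_series_rsum n b). intros x _.
    exact (is_series_swap_nonneg (p x) (a x) _ (Hp x) (Ha x) (Ha_sum x)). }
  assert (Hpyz : forall y, is_series (pyz y) (py y)).
  { intros y. exact (is_series_rsum n (fun x z => p x y z) (fun x => a x y) (fun x _ => Ha x y)). }
  set (f := fun y z => persp G n (fun x => p x y z)).
  assert (Hf_row : forall y, is_series (f y) (persp G n (fun x => a x y))).
  { intros y. apply (is_series_persp_proportional G n _ _ (pyz y) (py y)); auto.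
    intros z. apply rsum_nonneg. intros; apply Hp. }
  assert (Hf_col : forall z, Series (fun y => f y z) <= persp G n (fun x => b x z)).
  { intros z. apply (persp_series_le G n M G_bounded G_concave (fun y x => p x y z)).
    - intros; apply Hp.
    - intros x _. apply Hb. }
  assert (Hswap : is_series (fun z => Series (fun y => f y z)) (Series (fun y => Series (f y)))).
  { apply (is_series_swap f (fun y z => M * pyz y z) (fun y => M * py y) (M * 1)).
    - intros y z. apply persp_bound; [exact G_bounded|intros; apply Hp].
    - intros y. exact (is_series_scal_l M _ _ (Hpyz y)).
    - exact (is_series_scal_l M _ _ Hpy). }
  assert (Hb_avg : ex_series (fun z => persp G n (fun x => b x z))).
  { apply (ex_series_persp G n M G_bounded (fun z x => b x z) 1); [|exact Hpz].
    intros z x _. apply (is_series_nonneg (fun y => p x y z)); [intros; apply Hp|apply Hb]. }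
  unfold cond_avg. fold a b.
  rewrite (Series_ext _ (fun y => Series (f y)))
    by (intros y; symmetry; apply is_series_unique, Hf_row).
  exact (is_series_le _ _ _ _ Hswap (Series_correct _ Hb_avg) Hf_col).
Qed.

End ConditionalAverage.

Theorem proposition2 (eta : R -> R) (F : list R -> R) :
  gen_entropy eta F ->
  (forall (n : nat) (p : nat -> nat -> R),
      joint_pmf n p -> H_X eta F n p - H_cond eta F n p >= 0) /\
  (forall (n : nat) (p : nat -> nat -> nat -> R),
      joint3_pmf n p -> cond_indep_Z_X_given_Y n p ->
      H_cond eta F n (marg_XZ p) >= H_cond eta F n (marg_XY p)).
Proof.
  intros [[M HM] [_ [_ [[Heta HF] | [Heta HF]]]]]; split; unfold H_X.
  - intros n p Hp. rewrite H_cond_cond_avg. apply Rge_minus, Rle_ge, Heta.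
    exact (cond_avg_le_marginal F M HM HF n p Hp).
  - intros n p Hp HCI. rewrite !H_cond_cond_avg. apply Rle_ge, Heta.
    exact (cond_avg_data_processing F M HM HF n p Hp HCI).
  - intros n p Hp. rewrite H_cond_cond_avg. apply Rge_minus, Rle_ge, Heta.
    pose proof (cond_avg_le_marginal _ M (probvec_bound_opp F M HM) (F_convex_opp F HF) n p Hp)
      as H.
    rewrite cond_avg_opp in H. lra.
  - intros n p Hp HCI. rewrite !H_cond_cond_avg. apply Rle_ge, Heta.
    pose proof (cond_avg_data_processing _ M (probvec_bound_opp F M HM) (F_convex_opp F HF)
      n p Hp HCI) as H.
    rewrite !cond_avg_opp in H. lra.
Qed.
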